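(* Let $(X,d)$ be a compact metric space and let $f:X\to X$ be a continuous map. Then there is no subsystem $(Y,f|_Y)$ of $(X,f)$ such that the chain components poset $(\mathfrak{C}(Y,f|_Y),\preceq)$ is linearly and densely ordered.
   Context: A subsystem of $(X,f)$ is a pair $(Y,f|_Y)$ with $Y\subseteq X$ closed and $f$-invariant, i.e. $f(Y)\subseteq Y$. For a metric space $(Z,d)$ and map $g:Z\to Z$: an $\varepsilon$-chain from $x$ to $y$ is a finite sequence $x_0=x,\dots,x_n=y$ in $Z$, $n\ge1$, with $d(g(x_i),x_{i+1})<\varepsilon$; $x\,\mathcal{C}\,y$ iff for every $\varepsilon>0$ there is an $\varepsilon$-chain from $x$ to $y$; $CR(Z,g)=\{x:x\,\mathcal{C}\,x\}$; $x\,E\,y$ iff $x\,\mathcal{C}\,y$ and $y\,\mathcal{C}\,x$; $\mathfrak{C}(Z,g)=CR(Z,g)/E$ (chain components), ordered by $[x]\preceq[y]$ iff $y\,\mathcal{C}\,x$. A poset is densely ordered if it has at least two elements and for every $a<b$ there is $c$ with $a<c<b$. *)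

From HB Require Import structures.
From mathcomp Require Import all_boot all_order all_algebra.
From mathcomp Require Import all_classical all_reals all_analysis.
Set Implicit Arguments. Unset Strict Implicit. Unset Printing Implicit Defensive.
Import Order.TTheory GRing.Theory Num.Theory.
Local Open Scope classical_set_scope.
Local Open Scope ring_scope.

(* Chain recurrence for the subsystem (Y, g|_Y) of a metric space X:
   all chain points lie in Y, distance is the (restricted) metric mdist. *)
Section ChainDefs.
Context {R : realType} {X : metricType R}.

Definition eps_chain_in (Y : set X) (g : X -> X) (eps : R) (x y : X) : Prop :=
  exists (n : nat) (s : nat -> X),
    [/\ (0 < n)%N, s 0%N = x, s n = y,
        (forall i, (i <= n)%N -> Y (s i)) &
        (forall i, (i < n)%N -> mdist (g (s i)) (s i.+1) < eps)].

Definition chain_rel_in (Y : set X) (g : X -> X) (x y : X) : Prop :=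
  forall eps : R, 0 < eps -> eps_chain_in Y g eps x y.

Definition chain_recurrent_in (Y : set X) (g : X -> X) : set X :=
  [set x | Y x /\ chain_rel_in Y g x x].

Definition chain_equiv_in (Y : set X) (g : X -> X) (x y : X) : Prop :=
  chain_rel_in Y g x y /\ chain_rel_in Y g y x.

Definition chain_class_in (Y : set X) (g : X -> X) (x : X) : set X :=
  [set y | chain_recurrent_in Y g y /\ chain_equiv_in Y g x y].

Definition chain_components_in (Y : set X) (g : X -> X) : set (set X) :=
  [set A | exists x, chain_recurrent_in Y g x /\ A = chain_class_in Y g x].

Definition chain_comp_le (Y : set X) (g : X -> X) (A B : set X) : Prop :=
  exists x y, A x /\ B y /\ chain_rel_in Y g y x.

Definition subsystem (f : X -> X) (Y : set X) : Prop :=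
  closed Y /\ f @` Y `<=` Y.

End ChainDefs.

(* a poset (P, le) (le assumed to be a partial order on P) is linearly and
   densely ordered *)
Definition linearly_densely_ordered {T : Type} (P : set T) (le : T -> T -> Prop) : Prop :=
  [/\ (exists a b, P a /\ P b /\ a <> b),
      (forall a b, P a -> P b -> le a b \/ le b a) &
      (forall a b, P a -> P b -> le a b -> a <> b ->
         exists c, [/\ P c, le a c, a <> c, le c b & c <> b])].

From HB Require Import structures.
From mathcomp Require Import all_boot all_order all_algebra.
From mathcomp Require Import all_classical all_reals all_analysis.
From mathcomp Require Import zify lra.
Set Implicit Arguments. Unset Strict Implicit. Unset Printing Implicit Defensive.
Import Order.TTheory GRing.Theory Num.Theory.
Local Open Scope classical_set_scope.
Local Open Scope ring_scope.

(* Suppose the chain components of a subsystem were linearly ordered with at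
   least two of them, so that some e0-chain fails to go from a to b.  Let J be
   the chain recurrent points reached from b that no e0-chain from a reaches,
   and I the points reaching a that some e0-chain from a reaches.  By
   compactness J has a least component [t] and I a largest one [m]: both are
   limits of points of J resp. I, so they are chain recurrent, and membership
   passes to the limit because being e0-reachable from a is open and closed
   among chain recurrent points.  Any component between [m] and [t] would lie
   in I or in J, so there is none and the order is not dense. *)

Lemma compact_total_preorder_cluster {T : topologicalType} (S : set T)
    (rel : T -> T -> Prop) :
  compact [set: T] -> S !=set0 ->
  (forall z, S z -> rel z z) ->
  (forall z w, S z -> S w -> rel z w \/ rel w z) ->
  (forall z w v, rel z w -> rel w v -> rel z v) ->
  exists t, forall z, S z -> closure [set w | S w /\ rel z w] t.
Proof.
move=> cpt [z0 Sz0] refl tot trans.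
pose up z := [set w | S w /\ rel z w].
have upF : ProperFilter (filter_from S up).
  apply: filter_from_proper; last by move=> z Sz; exists z; split; last exact: refl.
  apply: filter_from_filter; first by exists z0.
  move=> z w Sz Sw; have [zw|wz] := tot z w Sz Sw.
  - by exists w => // v [Sv wv]; split; split => //; exact: trans zw wv.
  - by exists z => // v [Sv zv]; split; split => //; exact: trans wz zv.
have [t [_ clt]] := cpt _ upF filterT.
by exists t => z Sz B Bt; apply: clt Bt; exists z.
Qed.

Section MetricFacts.
Context {R : realType} {X : metricType R}.

Lemma closure_mdist (A : set X) t e :
  closure A t -> 0 < e -> exists w, A w /\ mdist t w < e.
Proof.
move=> clt e0; have [w [Aw tw]] := clt _ (nbhsx_ballx t e e0).
by exists w; split => //; move: tw; rewrite ballEmdist.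
Qed.

Lemma continuous_mdist (g : X -> X) x e : continuous g -> 0 < e ->
  exists2 d, 0 < d & forall y, mdist x y < d -> mdist (g x) (g y) < e.
Proof.
move=> cg e0; have /nbhs_ballP [d /= d0 hd] := cg x _ (nbhsx_ballx (g x) e e0).
exists d => // y xy.
have : ball (g x) e (g y) by apply: hd; rewrite ballEmdist.
by rewrite ballEmdist.
Qed.

End MetricFacts.

Section EpsChains.
Context {R : realType} {X : metricType R} (Y : set X) (g : X -> X).
Implicit Types (x y z : X) (e : R).

Local Notation Ce := (eps_chain_in Y g).
Local Notation C := (chain_rel_in Y g).

Lemma eps_chain_gt0 e x y : Ce e x y -> 0 < e.
Proof.
by move=> [n [s [n0 _ _ _ ss]]]; exact: le_lt_trans (mdist_ge0 _ _) (ss 0%N n0).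
Qed.

Lemma eps_chain_trans e x y z : Ce e x y -> Ce e y z -> Ce e x z.
Proof.
move=> [n1 [s1 [n10 s10 s1n s1Y s1s]]] [n2 [s2 [n20 s20 s2n s2Y s2s]]].
exists (n1 + n2)%N, (fun i => if (i < n1)%N then s1 i else s2 (i - n1)%N).
split.
- lia.
- by rewrite n10.
- by rewrite ltnNge leq_addr /= addKn.
- by move=> i hi; case: ifP => hi1; [apply: s1Y | apply: s2Y]; lia.
- move=> i hi; case: ifP => hi1.
  + case: ifP => hi2; first exact: s1s.
    have hn : n1 = i.+1 by lia.
    by rewrite hn subnn s20 -s1n hn; apply: s1s; lia.
  + have -> : (i.+1 < n1)%N = false by lia.
    have -> : (i.+1 - n1 = (i - n1).+1)%N by lia.
    by apply: s2s; lia.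
Qed.

Lemma eps_chain_move_end e e' x y y' : Ce e x y -> Y y' ->
  mdist y y' + e <= e' -> Ce e' x y'.
Proof.
move=> [n [s [n0 s0 sn sY ss]]] Yy' he.
exists n, (fun i => if i == n then y' else s i); split => //.
- by have -> : (0 == n) = false by lia.
- by rewrite eqxx.
- by move=> i hi; case: eqP => // _; apply: sY.
- move=> i hi; have -> : (i == n) = false by lia.
  have := ss i hi; have := mdist_ge0 y y'.
  case: eqP => [->|_]; last by lra.
  by rewrite sn; have := metric_triangle (g (s i)) y y'; lra.
Qed.

Lemma eps_chain_move_start e e' x x' y : Ce e x y -> Y x' ->
  mdist (g x') (g x) + e <= e' -> Ce e' x' y.
Proof.
move=> [n [s [n0 s0 sn sY ss]]] Yx' he.
exists n, (fun i => if i == 0%N then x' else s i); split => //.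
- by have -> : (n == 0%N) = false by lia.
- by move=> i hi; case: eqP => // _; apply: sY.
- move=> i hi; have := ss i hi; have := mdist_ge0 (g x') (g x).
  case: eqP => [->|_]; last by lra.
  by rewrite s0; have := metric_triangle (g x') (g x) (s 1%N); lra.
Qed.

Lemma eps_chain_open e x y : Ce e x y ->
  exists2 d, 0 < d & forall y', Y y' -> mdist y y' < d -> Ce e x y'.
Proof.
move=> [n [s [n0 s0 sn sY ss]]].
have /ss : (n.-1 < n)%N by rewrite ltn_predL.
rewrite prednK // sn => last_jump.
exists (e - mdist (g (s n.-1)) y); first by rewrite subr_gt0.
move=> y' Yy' yy'; exists n, (fun i => if i == n then y' else s i); split => //.
- by have -> : (0 == n) = false by lia.
- by rewrite eqxx.
- by move=> i hi; case: eqP => // _; apply: sY.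
- move=> i hi; have -> : (i == n) = false by lia.
  case: eqP => [hin|_]; last exact: ss.
  have -> : i = n.-1 by lia.
  by have := metric_triangle (g (s n.-1)) y y'; lra.
Qed.

Lemma chain_rel_trans x y z : C x y -> C y z -> C x z.
Proof. by move=> xy yz e e0; exact: eps_chain_trans (xy e e0) (yz e e0). Qed.

Lemma chain_rel_eps_chain_trans e x y z : C x y -> Ce e y z -> Ce e x z.
Proof. by move=> xy yz; exact: eps_chain_trans (xy e (eps_chain_gt0 yz)) yz. Qed.

Lemma eps_chain_chain_rel_trans e x y z : Ce e x y -> C y z -> Ce e x z.
Proof. by move=> xy yz; exact: eps_chain_trans xy (yz e (eps_chain_gt0 xy)). Qed.

End EpsChains.

Section ChainRecurrentSet.
Context {R : realType} {X : metricType R} (Y : set X) (f : X -> X).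
Hypotheses (closedY : closed Y) (contf : continuous f).
Implicit Types (x y z : X) (e : R).

Local Notation Ce := (eps_chain_in Y f).
Local Notation C := (chain_rel_in Y f).
Local Notation CR := (chain_recurrent_in Y f).

Lemma chain_recurrent_closed : closed CR.
Proof.
move=> t clt; have Yt : Y t.
  by apply: closedY; apply: closureS clt => z [].
split => // e e0.
have e4 : 0 < e / 4 by lra.
have [d d0 hd] := continuous_mdist t contf e4.
have de4 : 0 < Num.min d (e / 4) by rewrite lt_min d0 e4.
have [w [[Yw ww] tw]] := closure_mdist clt de4.
move: tw; rewrite lt_min => /andP[/hd ftw tw].
have tw2 : Ce (e / 2) t w.
  by apply: eps_chain_move_start (ww _ e4) Yt _; lra.
by apply: eps_chain_move_end tw2 Yt _; rewrite metric_sym; lra.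
Qed.

(* Continuity of f at m lets a chain through m start at any nearby point. *)
Lemma chain_recurrent_closure_chains (A : set X) m e : A `<=` Y -> CR m ->
  closure A m -> 0 < e -> exists w, [/\ A w, Ce e w m & Ce e m w].
Proof.
move=> AY [Ym mm] clm e0.
have e2 : 0 < e / 2 by lra.
have [d d0 hd] := continuous_mdist m contf e2.
have de2 : 0 < Num.min d (e / 2) by rewrite lt_min d0 e2.
have [w [Aw mw]] := closure_mdist clm de2.
move: mw; rewrite lt_min => /andP[/hd fmw mw].
exists w; split => //.
- by apply: eps_chain_move_start (mm _ e2) (AY w Aw) _; rewrite metric_sym; lra.
- by apply: eps_chain_move_end (mm _ e2) (AY w Aw) _; lra.
Qed.

Section Extremal.
Hypothesis compactX : compact [set: X].
Variable S : set X.
Hypotheses (S_CR : S `<=` CR) (S0 : S !=set0)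
  (S_total : forall z w, S z -> S w -> C z w \/ C w z).

Let S_refl z : S z -> C z z. Proof. by move=> /S_CR []. Qed.

Let closure_S_CR t : closure S t -> CR t.
Proof. by move=> clt; apply: chain_recurrent_closed; exact: closureS clt. Qed.

Lemma chain_rel_least :
  exists t, [/\ CR t, closure S t & forall z, S z -> C z t].
Proof.
have [t clt] := compact_total_preorder_cluster compactX S0 S_refl S_total
  (@chain_rel_trans _ _ Y f).
have [z0 Sz0] := S0.
have clSt : closure S t by apply: closureS (clt z0 Sz0) => w [].
exists t; split => //; first exact: closure_S_CR.
move=> z Sz e e0.
have [|w [[_ zw] wt _]] :=
  chain_recurrent_closure_chains _ (closure_S_CR clSt) (clt z Sz) e0.
  by move=> w [/S_CR[]].
exact: chain_rel_eps_chain_trans zw wt.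
Qed.

Lemma chain_rel_greatest :
  exists m, [/\ CR m, closure S m & forall z, S z -> C m z].
Proof.
have [m clm] := compact_total_preorder_cluster (rel := fun z w => C w z)
  compactX S0 S_refl
  (fun z w Sz Sw => S_total Sw Sz) (fun z w v zw wv => chain_rel_trans wv zw).
have [z0 Sz0] := S0.
have clSm : closure S m by apply: closureS (clm z0 Sz0) => w [].
exists m; split => //; first exact: closure_S_CR.
move=> z Sz e e0.
have [|w [[_ wz] _ mw]] :=
  chain_recurrent_closure_chains _ (closure_S_CR clSm) (clm z Sz) e0.
  by move=> w [/S_CR[]].
exact: eps_chain_chain_rel_trans mw wz.
Qed.

End Extremal.

Lemma chain_rel_gap a b e0 : compact [set: X] ->
  (forall z w, CR z -> CR w -> C z w \/ C w z) ->
  CR a -> CR b -> 0 < e0 -> ~ Ce e0 a b ->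
  exists m t, [/\ CR m, CR t, C t m, ~ C m t &
    forall d, CR d -> C d m -> C t d -> C m d \/ C d t].
Proof.
move=> cpt total CRa CRb e0_gt0 nab.
have aa : C a a by case: CRa.
have bb : C b b by case: CRb.
pose J z := [/\ CR z, C b z & ~ Ce e0 a z].
pose I z := [/\ CR z, C z a & Ce e0 a z].
have [|||t [CRt clJt tmin]] := @chain_rel_least cpt J.
- by move=> z [].
- by exists b.
- by move=> z w [CRz _ _] [CRw _ _]; exact: total.
have [|||m [CRm clIm mmax]] := @chain_rel_greatest cpt I.
- by move=> z [].
- by exists a; split => //; exact: aa.
- by move=> z w [CRz _ _] [CRw _ _]; exact: total.
have Jt : J t.
  split => //; first exact: tmin.
  move=> /eps_chain_open[d d0 hd].
  have [w [[[Yw _] _ naw] tw]] := closure_mdist clJt d0.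
  exact: naw (hd w Yw tw).
have Im : I m.
  split => //; first by apply: mmax; split => //; exact: aa.
  have [|w [[_ _ aw] wm _]] := chain_recurrent_closure_chains _ CRm clIm e0_gt0.
    by move=> w [[]].
  exact: eps_chain_trans aw wm.
have nmt : ~ C m t.
  case: Jt Im => _ _ not_at [_ _ am] mt; apply: not_at.
  exact: eps_chain_chain_rel_trans am mt.
have [tm|//] := total t m CRt CRm.
exists m, t; split => // d CRd dm td.
have [ad|nad] := pselect (Ce e0 a d).
- by left; apply: mmax; split => //; case: Im => _ ma _; exact: chain_rel_trans dm ma.
- by right; apply: tmin; split => //; case: Jt => _ bt _; exact: chain_rel_trans bt td.
Qed.

Local Notation cls := (chain_class_in Y f).
Local Notation comps := (chain_components_in Y f).
Local Notation le := (chain_comp_le Y f).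

Lemma chain_class_self x : CR x -> cls x x.
Proof. by move=> [Yx xx]; split => //; split. Qed.

Lemma chain_comp_le_classE x y : CR x -> CR y -> le (cls x) (cls y) <-> C y x.
Proof.
move=> CRx CRy; split.
- move=> [u [v [[_ [_ xu]] [[_ [yv _]] vu]]]].
  exact: chain_rel_trans (chain_rel_trans yv vu) xu.
- by move=> yx; exists x, y; split; last split; try exact: chain_class_self.
Qed.

Lemma chain_class_eqE x y : CR x -> CR y -> cls x = cls y <-> C x y /\ C y x.
Proof.
move=> CRx CRy; split.
- by move=> exy; have [_ []] : cls x y by rewrite exy; exact: chain_class_self.
- move=> [xy yx]; apply/seteqP; split => z [CRz [h1 h2]]; split => //; split.
  + exact: chain_rel_trans yx h1.
  + exact: chain_rel_trans h2 xy.
  + exact: chain_rel_trans xy h1.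
  + exact: chain_rel_trans h2 yx.
Qed.

Lemma chain_rel_total :
  (forall A B, comps A -> comps B -> le A B \/ le B A) ->
  forall z w, CR z -> CR w -> C z w \/ C w z.
Proof.
move=> lin z w CRz CRw.
have [zw|wz] : le (cls z) (cls w) \/ le (cls w) (cls z).
  by apply: lin; [exists z | exists w].
- by right; apply/(chain_comp_le_classE CRz CRw).
- by left; apply/(chain_comp_le_classE CRw CRz).
Qed.

Lemma not_linearly_densely_ordered_chain_components : compact [set: X] ->
  ~ linearly_densely_ordered comps le.
Proof.
move=> cpt [[_ [_ [[a [CRa ->]] [[b [CRb ->]] ab]]]] /chain_rel_total total dense].
have [x [y [CRx CRy nxy]]] : exists x y, [/\ CR x, CR y & ~ C x y].
  have [ab_rel|nab_rel] := pselect (C a b); last by exists a, b.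
  exists b, a; split => // ba; apply: ab; exact/chain_class_eqE.
have [e0 e0_gt0 nxy0] : exists2 e0, 0 < e0 & ~ Ce e0 x y.
  by apply: contrapT => h; apply: nxy => e e0; apply: contrapT => ne; apply: h; exists e.
have [m [t [CRm CRt tm nmt between]]] := chain_rel_gap cpt total CRx CRy e0_gt0 nxy0.
have compm : comps (cls m) by exists m.
have compt : comps (cls t) by exists t.
have le_mt : le (cls m) (cls t) by apply/chain_comp_le_classE.
have ne_mt : cls m <> cls t by move/(chain_class_eqE CRm CRt) => [].
have [_ [[d [CRd ->]] md nmd dt ndt]] := dense _ _ compm compt le_mt ne_mt.
move/(chain_comp_le_classE CRm CRd): md => dm.
move/(chain_comp_le_classE CRd CRt): dt => td.
have [md|dt] := between d CRd dm td.
- by apply: nmd; exact/chain_class_eqE.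
- by apply: ndt; exact/chain_class_eqE.
Qed.

End ChainRecurrentSet.

Theorem corollary2p2 (R : realType) (X : metricType R) (f : X -> X) :
  compact [set: X] -> continuous f ->
  ~ (exists Y : set X, subsystem f Y /\
       linearly_densely_ordered (chain_components_in Y f) (chain_comp_le Y f)).
Proof.
move=> cpt contf [Y [[closedY _] ldo]].
exact: not_linearly_densely_ordered_chain_components closedY contf cpt ldo.
Qed.
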